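(* Let $\kappa:[-1,1]\to\mathbb{R}$ be given by $\kappa(t)=\sum_{q\ge 0}\frac{J_q^2}{q!}t^q$, where $J_q\in\mathbb{R}$, $J_q\neq 0$ for infinitely many $q$, $\sum_{q\ge1}\frac{|J_q|}{(q-1)!}<\infty$ (so that $\kappa\in C^1([-1,1])$), and $\kappa(1)=1$. Let $\mathcal{I}(\kappa)=\{t\in[-1,1]:\kappa(t)=1\}$. Assume $\kappa'(1)\le 1$. Then either $\mathcal{I}(\kappa)=\{1\}$ or $\mathcal{I}(\kappa)=\{-1,1\}$. Moreover, $\mathcal{I}(\kappa)=\{-1,1\}$ if and only if $\kappa(t)=\kappa(-t)$ for all $t\in[-1,1]$. *)

From Stdlib Require Import Reals.
From Coquelicot Require Import Coquelicot.
Open Scope R_scope.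

Definition kappa (J : nat -> R) (t : R) : R :=
  Series (fun q => J q ^ 2 / INR (Factorial.fact q) * t ^ q).

Definition Ikappa (J : nat -> R) (t : R) : Prop :=
  -1 <= t <= 1 /\ kappa J t = 1.

(* All Taylor coefficients [J_q^2 / q!] of kappa are nonnegative, so for [|t| <= 1]
   the series [kappa 1 - kappa t = sum_q J_q^2 / q! (1 - t^q)] has nonnegative terms.
   For [|t| < 1] the term of any [q >= 1] with [J_q <> 0] is positive, hence
   [kappa t < 1].  At [t = -1] the difference vanishes iff every odd coefficient does,
   i.e. iff kappa is even. *)
From Stdlib Require Import Reals Lra Classical.
From Coquelicot Require Import Coquelicot.
Open Scope R_scope.

Lemma sum_n_ge_term (u : nat -> R) (n : nat) :
  (forall k, 0 <= u k) -> u n <= sum_n u n.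
Proof.
  intros u_ge0. destruct n as [|n].
  - rewrite sum_O. lra.
  - rewrite sum_n_Reals. simpl.
    pose proof (cond_pos_sum u n u_ge0). lra.
Qed.

Lemma Series_ge_term (u : nat -> R) (n : nat) :
  (forall k, 0 <= u k) -> ex_series u -> u n <= Series u.
Proof.
  intros u_ge0 u_sum.
  apply Rle_trans with (sum_n u n); [now apply sum_n_ge_term|].
  apply is_lim_seq_incr_compare; [exact (Series_correct _ u_sum)|].
  intro k. rewrite sum_Sn. unfold plus; simpl. specialize (u_ge0 (S k)). lra.
Qed.

(* [Series] is [0] on divergent series, so a nonzero value certifies convergence. *)
Lemma Series_nonneg_correct (u : nat -> R) :
  (forall k, 0 <= u k) -> Series u <> 0 -> is_series u (Series u).
Proof.
  intros u_ge0 Su_neq0.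
  assert (partial_incr : forall n, sum_n u n <= sum_n u (S n)).
  { intro n. rewrite sum_Sn. unfold plus; simpl. specialize (u_ge0 (S n)). lra. }
  destruct (ex_lim_seq_incr _ partial_incr) as [l Hl].
  unfold Series in *. rewrite (is_lim_seq_unique _ _ Hl) in *.
  destruct l as [l| |]; simpl in *; [exact Hl| |]; contradiction.
Qed.

Lemma pow_le1 (t : R) (q : nat) : Rabs t <= 1 -> t ^ q <= 1.
Proof.
  intro t_le1. apply Rle_trans with (Rabs (t ^ q)); [apply Rle_abs|].
  rewrite <- RPow_abs, <- (pow1 q). apply pow_incr. split; [apply Rabs_pos | exact t_le1].
Qed.

Definition pseries (a : nat -> R) (t : R) : R := Series (fun q => a q * t ^ q).

Section NonnegPowerSeries.

Variable a : nat -> R.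
Hypothesis a_ge0 : forall q, 0 <= a q.
Hypothesis a_sum1 : ex_series (fun q => a q * 1 ^ q).

Lemma ex_series_pow (t : R) : Rabs t <= 1 -> ex_series (fun q => a q * t ^ q).
Proof.
  intro t_le1.
  apply (@ex_series_le R_AbsRing R_CompleteNormedModule _ (fun q => a q * 1 ^ q));
    [intro q | exact a_sum1].
  change (norm (a q * t ^ q)) with (Rabs (a q * t ^ q)).
  rewrite Rabs_mult, Rabs_pos_eq, <- RPow_abs by apply a_ge0.
  apply Rmult_le_compat_l; [apply a_ge0|]. apply pow_incr. split; [apply Rabs_pos | exact t_le1].
Qed.

Let gap (t : R) (q : nat) : R := a q * 1 ^ q - a q * t ^ q.

Lemma gap_ge0 (t : R) (q : nat) : Rabs t <= 1 -> 0 <= gap t q.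
Proof.
  intro t_le1. unfold gap. rewrite pow1.
  pose proof (a_ge0 q). pose proof (pow_le1 t q t_le1). nra.
Qed.

Lemma Series_gap (t : R) : Rabs t <= 1 -> Series (gap t) = pseries a 1 - pseries a t.
Proof.
  intro t_le1. apply Series_minus; [exact a_sum1 | now apply ex_series_pow].
Qed.

Lemma gap_le_Series (t : R) (q : nat) :
  Rabs t <= 1 -> gap t q <= pseries a 1 - pseries a t.
Proof.
  intro t_le1. rewrite <- Series_gap by exact t_le1.
  apply Series_ge_term; [intro k; now apply gap_ge0|].
  apply (@ex_series_minus R_AbsRing R_NormedModule); [exact a_sum1 | now apply ex_series_pow].
Qed.

Lemma pseries_lt_at_1 (t : R) (q : nat) :
  Rabs t < 1 -> (1 <= q)%nat -> 0 < a q -> pseries a t < pseries a 1.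
Proof.
  intros t_lt1 q_ge1 aq_gt0.
  assert (tq_lt1 : t ^ q < 1).
  { apply Rle_lt_trans with (Rabs (t ^ q)); [apply Rle_abs|].
    rewrite <- RPow_abs. apply pow_lt_1_compat; [split; [apply Rabs_pos | exact t_lt1] | exact q_ge1]. }
  assert (gap_pos : 0 < gap t q) by (unfold gap; rewrite pow1; nra).
  pose proof (gap_le_Series t q (Rlt_le _ _ t_lt1)). lra.
Qed.

Lemma pseries_opp1_coef (q : nat) :
  pseries a (-1) = pseries a 1 -> a q * (-1) ^ q = a q.
Proof.
  intro opp1_eq.
  assert (abs_opp1 : Rabs (-1) <= 1) by (apply Rabs_le; lra).
  pose proof (gap_ge0 (-1) q abs_opp1). pose proof (gap_le_Series (-1) q abs_opp1).
  unfold gap in *. rewrite pow1 in *. lra.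
Qed.

Lemma pseries_even :
  pseries a (-1) = pseries a 1 -> forall t, pseries a (- t) = pseries a t.
Proof.
  intros opp1_eq t. apply Series_ext. intro q.
  replace (- t) with (-1 * t) by ring.
  rewrite Rpow_mult_distr, <- Rmult_assoc, (pseries_opp1_coef q opp1_eq). reflexivity.
Qed.

End NonnegPowerSeries.

Definition acoef (J : nat -> R) (q : nat) : R := J q ^ 2 / INR (Factorial.fact q).

Lemma kappa_pseries (J : nat -> R) (t : R) : kappa J t = pseries (acoef J) t.
Proof. reflexivity. Qed.

Lemma acoef_ge0 (J : nat -> R) (q : nat) : 0 <= acoef J q.
Proof.
  unfold acoef. apply Rdiv_le_0_compat; [apply pow2_ge_0 | apply INR_fact_lt_0].
Qed.

Lemma acoef_pos (J : nat -> R) (q : nat) : J q <> 0 -> 0 < acoef J q.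
Proof.
  intro Jq_neq0. unfold acoef. apply Rdiv_lt_0_compat; [|apply INR_fact_lt_0].
  apply pow2_gt_0. exact Jq_neq0.
Qed.

Section Kappa.

Variable J : nat -> R.
Hypothesis J_nontrivial : exists q, (1 <= q)%nat /\ J q <> 0.
Hypothesis kappa1 : kappa J 1 = 1.

Lemma acoef_sum1 : ex_series (fun q => acoef J q * 1 ^ q).
Proof.
  eexists. apply Series_nonneg_correct.
  - intro q. rewrite pow1, Rmult_1_r. apply acoef_ge0.
  - change (kappa J 1 <> 0). lra.
Qed.

Lemma Ikappa_cases (t : R) : Ikappa J t -> t = -1 \/ t = 1.
Proof.
  intros [t_bound kappa_t]. destruct J_nontrivial as [q [q_ge1 Jq_neq0]].
  destruct (Req_dec t (-1)) as [|t_neq]; [now left|].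
  destruct (Req_dec t 1) as [|t_neq']; [now right|].
  exfalso.
  assert (t_lt1 : Rabs t < 1) by (apply Rabs_def1; lra).
  pose proof (pseries_lt_at_1 _ (acoef_ge0 J) acoef_sum1 t q t_lt1 q_ge1 (acoef_pos J q Jq_neq0)).
  rewrite <- !kappa_pseries in *. lra.
Qed.

Lemma Ikappa_opp1_even :
  Ikappa J (-1) <-> (forall t, -1 <= t <= 1 -> kappa J t = kappa J (- t)).
Proof.
  split.
  - intros [_ kappa_opp1] t _. rewrite !kappa_pseries.
    symmetry. apply (pseries_even _ (acoef_ge0 J) acoef_sum1).
    rewrite <- !kappa_pseries. lra.
  - intro even. split; [lra|]. rewrite even by lra.
    replace (- -1) with 1 by ring. exact kappa1.
Qed.

End Kappa.

Theorem lemma3p5 (J : nat -> R)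
  (Hinf : forall N : nat, exists q : nat, (N <= q)%nat /\ J q <> 0)
  (Hsum : ex_series (fun k => Rabs (J (S k)) / INR (Factorial.fact k)))
  (H1 : kappa J 1 = 1)
  (Hder : exists l : R,
      filterlim (fun t => (kappa J t - kappa J 1) / (t - 1)) (at_left 1) (locally l)
      /\ l <= 1) :
  ((forall t, Ikappa J t <-> t = 1) \/
   (forall t, Ikappa J t <-> (t = -1 \/ t = 1))) /\
  ((forall t, Ikappa J t <-> (t = -1 \/ t = 1)) <->
   (forall t, -1 <= t <= 1 -> kappa J t = kappa J (- t))).
Proof.
  pose proof (Ikappa_cases J (Hinf 1%nat) H1) as cases.
  pose proof (Ikappa_opp1_even J H1) as opp1_even.
  assert (I1 : Ikappa J 1) by (split; [lra | exact H1]).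
  assert (both : Ikappa J (-1) -> forall t, Ikappa J t <-> (t = -1 \/ t = 1)).
  { intros I_opp1 t. split; [apply cases | now intros [-> | ->]]. }
  split.
  - destruct (classic (Ikappa J (-1))) as [I_opp1 | notI_opp1].
    + right. now apply both.
    + left. intro t. split; [|now intros ->].
      intro It. destruct (cases t It) as [-> | ->]; [contradiction | reflexivity].
  - rewrite <- opp1_even. split; [|exact both].
    intro iff. apply iff. now left.
Qed.
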